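(* Let $q\neq-1$ and $r$ be real parameters, $n\ge 0$, $k\ge 0$. The $w_r$-weight $u(n,k,s,r)$ of the set of all tilings of an $n$-board with exactly $k$ dominoes is $$u(n,k,s,r)=q^{k^2}\begin{bmatrix} n-k\\ k\end{bmatrix}(1+q^{k+1}r)\cdots(1+q^{n-k}r)\,s^kx^{n-2k}$$ for $0\le k\le\lfloor n/2\rfloor$, and $u(n,k,s,r)=0$ for $k>\lfloor n/2\rfloor$.
   Context: An $n$-board is a $1\times n$ rectangle with cells numbered $1,\dots,n$, tiled by white squares, black squares (each covering one cell) and dominoes (covering two adjacent cells). The weight $w_r$: a white square has weight $x$; a black square at cell $i$ has weight $q^i r x$; a domino covering cells $i-1,i$ has weight $q^{i-1}s$. The weight of a tiling is the product of the weights of its tiles; the weight of a set of tilings is the sum of the weights. Notation: $[m]=1+q+\cdots+q^{m-1}$, $[m]!=[1][2]\cdots[m]$, and $\begin{bmatrix} m\\ j\end{bmatrix}=\frac{[m]!}{[j]![m-j]!}$ for $0\le j\le m$. Empty products equal $1$. *)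

From HB Require Import structures.
From mathcomp Require Import all_boot all_order all_algebra.
Set Implicit Arguments. Unset Strict Implicit. Unset Printing Implicit Defensive.
Import Order.TTheory GRing.Theory Num.Theory.
Local Open Scope ring_scope.

Inductive tile := White | Black | Domino.

Definition tile_to_ord (t : tile) : 'I_3 :=
  match t with White => inord 0 | Black => inord 1 | Domino => inord 2 end.
Definition ord_to_tile (i : 'I_3) : tile :=
  match val i with 0%N => White | 1%N => Black | _ => Domino end.
Lemma tile_to_ordK : cancel tile_to_ord ord_to_tile.
Proof. by case; rewrite /ord_to_tile /= inordK. Qed.
HB.instance Definition _ := Finite.copy tile (can_type tile_to_ordK).

Definition tile_len (t : tile) : nat := if t is Domino then 2 else 1.

Definition tiles_len (s : seq tile) : nat := (\sum_(t <- s) tile_len t)%N.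

Definition is_tiling (n : nat) (s : seq tile) : bool := tiles_len s == n.

Definition ndom (s : seq tile) : nat := count (pred1 Domino) s.

(* w_r-weight of the tiles s, when the cells 1..c are already covered
   (so the first tile of s starts at cell c+1):
   white: x; black at cell i: q^i r x; domino on cells i-1,i: q^(i-1) s. *)
Fixpoint wr {R : ringType} (q r sd x : R) (c : nat) (s : seq tile) : R :=
  match s with
  | [::] => 1
  | White :: s' => x * wr q r sd x c.+1 s'
  | Black :: s' => (q ^+ c.+1 * r * x) * wr q r sd x c.+1 s'
  | Domino :: s' => (q ^+ c.+1 * sd) * wr q r sd x c.+2 s'
  end.

(* u(n,k,s,r): weight of the set of all tilings of the n-board with exactly
   k dominoes.  A tiling of the n-board uses at most n tiles, so we sum over
   all tile sequences of length m <= n. *)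
Definition u {R : ringType} (q r sd x : R) (n k : nat) : R :=
  \sum_(m < n.+1) \sum_(t : m.-tuple tile | is_tiling n t && (ndom t == k))
     wr q r sd x 0 t.

Definition qint {R : ringType} (q : R) (m : nat) : R := \sum_(i < m) q ^+ i.
Definition qfact {R : ringType} (q : R) (m : nat) : R :=
  \prod_(i < m) qint q i.+1.
Definition qbinom {R : fieldType} (q : R) (m j : nat) : R :=
  qfact q m / (qfact q j * qfact q (m - j)).

(* Split a tiling according to its first tile.  A white or black square on cell
   1 leaves a tiling of cells 2..n, a domino leaves one of cells 3..n, and
   shifting a tiling by c cells multiplies the weight of every black square and
   domino by q^c, i.e. replaces (r, s) by (q^c r, q^c s).  Hence u satisfies
     u(n+1, k; r, s) = x (1 + q r) u(n, k; q r, q s) + q s u(n-1, k-1; q^2 r, q^2 s),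
   and the closed form satisfies the same recurrence thanks to the two q-Pascal
   identities (which need [m] != 0, i.e. q != -1 in an ordered field). *)
From HB Require Import structures.
From mathcomp Require Import all_boot all_order all_algebra.
From mathcomp Require Import ring zify.
Set Implicit Arguments. Unset Strict Implicit. Unset Printing Implicit Defensive.
Import Order.TTheory GRing.Theory Num.Theory.
Local Open Scope ring_scope.

Lemma big_tuple0 (R : Type) (idx : R) (op : Monoid.com_law idx) (T : finType)
    (P : pred (seq T)) (F : seq T -> R) :
  \big[op/idx]_(t : 0.-tuple T | P t) F t = if P [::] then F [::] else idx.
Proof.
by rewrite big_mkcond (big_pred1 [tuple]) // => t; rewrite (tuple0 t) /= eqxx.
Qed.

Lemma big_tuple_cons (R : Type) (idx : R) (op : Monoid.com_law idx)
    (T : finType) m (P : pred (seq T)) (F : seq T -> R) :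
  \big[op/idx]_(t : m.+1.-tuple T | P t) F t =
  \big[op/idx]_(a : T) \big[op/idx]_(t : m.-tuple T | P (a :: t)) F (a :: t).
Proof.
rewrite (reindex (fun p : T * m.-tuple T => [tuple of p.1 :: p.2])) /=.
  by rewrite pair_big_dep.
exists (fun t : m.+1.-tuple T => (thead t, [tuple of behead t])).
  by move=> [a t] _ /=; rewrite theadE; congr pair; apply: val_inj.
by move=> t _; rewrite /= -tuple_eta.
Qed.

Lemma tile_eqE (a b : tile) : (a == b) = (tile_to_ord a == tile_to_ord b).
Proof. by []. Qed.

Lemma enum_tileE : perm_eq (enum {: tile}) [:: White; Black; Domino].
Proof.
apply: uniq_perm; first exact: enum_uniq.
  by rewrite /= !inE !tile_eqE /= -!val_eqE /= !inordK.
by case; rewrite mem_enum !inE !tile_eqE eqxx ?orbT.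
Qed.

Lemma big_tile (R : Type) (idx : R) (op : Monoid.com_law idx) (F : tile -> R) :
  \big[op/idx]_(a : tile) F a = op (F White) (op (F Black) (F Domino)).
Proof. by rewrite -big_enum (perm_big _ enum_tileE) !big_cons big_nil Monoid.mulm1. Qed.

Lemma tiles_len_cons a t : tiles_len (a :: t) = (tile_len a + tiles_len t)%N.
Proof. by rewrite /tiles_len big_cons. Qed.

Lemma size_le_tiles_len t : (size t <= tiles_len t)%N.
Proof. by elim: t => [|a t IH] //; rewrite tiles_len_cons; case: a => /=; lia. Qed.

Lemma ndom_cons a t :
  ndom (a :: t) = if a is Domino then (ndom t).+1 else ndom t.
Proof. by case: a; rewrite /ndom /= tile_eqE /= -val_eqE /= !inordK. Qed.

Lemma ndom_le_tiles_len t : (2 * ndom t <= tiles_len t)%N.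
Proof. by elim: t => [|a t IH] //; rewrite tiles_len_cons ndom_cons; case: a => /=; lia. Qed.

Section TilingSums.
Variable V : nmodType.
Implicit Types F : seq tile -> V.

Definition tiling_sum n F : V :=
  \sum_(m < n.+1) \sum_(t : m.-tuple tile | is_tiling n t) F t.

Lemma eq_tiling_sum n F G : F =1 G -> tiling_sum n F = tiling_sum n G.
Proof. by move=> eFG; apply: eq_bigr => m _; apply: eq_bigr => t _. Qed.

Lemma tiling_sumD n F G :
  tiling_sum n (fun t => F t + G t) = tiling_sum n F + tiling_sum n G.
Proof. by rewrite -big_split; apply: eq_bigr => m _; rewrite -big_split. Qed.

Lemma tiling_sum0 F : tiling_sum 0 F = F [::].
Proof. by rewrite /tiling_sum big_ord1 big_tuple0 /is_tiling /tiles_len big_nil. Qed.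

Lemma tiling_sum_eq0 n F : (forall t, is_tiling n t -> F t = 0) ->
  tiling_sum n F = 0.
Proof. by move=> F0; apply: big1 => m _; apply: big1 => t /F0. Qed.

Lemma tiling_sumS n F :
  tiling_sum n.+1 F = tiling_sum n (F \o cons White) +
    tiling_sum n (F \o cons Black) +
    (if n is n'.+1 then tiling_sum n' (F \o cons Domino) else 0).
Proof.
have tilingW t : is_tiling n.+1 (White :: t) = is_tiling n t.
  by rewrite /is_tiling tiles_len_cons add1n eqSS.
have tilingB t : is_tiling n.+1 (Black :: t) = is_tiling n t.
  by rewrite /is_tiling tiles_len_cons add1n eqSS.
have tilingD t : is_tiling n.+1 (Domino :: t) =
    if n is n'.+1 then is_tiling n' t else false.
  rewrite /is_tiling tiles_len_cons.
  by case: n {tilingW tilingB} => [|n] /=; apply/eqP/eqP; lia.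
have nil_tiling : is_tiling n.+1 [::] = false by rewrite /is_tiling /tiles_len big_nil.
rewrite /tiling_sum big_ord_recl big_tuple0 nil_tiling add0r.
under eq_bigr => m _ do rewrite (big_tuple_cons _ _ (is_tiling n.+1)) big_tile.
rewrite !big_split /= addrA.
under [X in X + _ + _]eq_bigr => m _ do under eq_bigl => t do rewrite tilingW.
under [X in _ + X + _]eq_bigr => m _ do under eq_bigl => t do rewrite tilingB.
under [X in _ + X]eq_bigr => m _ do under eq_bigl => t do rewrite tilingD.
case: n {tilingW tilingB tilingD nil_tiling} => [|n] /=.
  by rewrite [X in _ + X]big1 // => m _; apply: big_pred0.
rewrite [X in _ + X]big_ord_recr /= [X in _ + (_ + X)]big_pred0 ?addr0 //.
by move=> t; apply/negbTE/eqP; have := size_le_tiles_len t; rewrite size_tuple; lia.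
Qed.

End TilingSums.

Section Weights.
Variable R : comNzRingType.
Implicit Types (q r s x : R) (n k : nat).

Lemma tiling_sumZ n (c : R) (F : seq tile -> R) :
  tiling_sum n (fun t => c * F t) = c * tiling_sum n F.
Proof. by rewrite /tiling_sum mulr_sumr; apply: eq_bigr => m _; rewrite mulr_sumr. Qed.

Lemma wr_shift q r s x c t : wr q r s x c.+1 t = wr q (q * r) (q * s) x c t.
Proof.
elim: t c r s => [|a t IH] c r s //=.
by case: a => /=; rewrite IH // !exprS; ring.
Qed.

Lemma u_tiling_sum q r s x n k :
  u q r s x n k = tiling_sum n (fun t => (ndom t == k)%:R * wr q r s x 0 t).
Proof.
apply: eq_bigr => m _; rewrite big_mkcondr; apply: eq_bigr => t _.
by case: eqP; rewrite ?mul1r ?mul0r.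
Qed.

Lemma u0 q r s x k : u q r s x 0 k = (k == 0%N)%:R.
Proof. by rewrite u_tiling_sum tiling_sum0 mulr1 eq_sym. Qed.

Lemma u_eq0 q r s x n k : (n < 2 * k)%N -> u q r s x n k = 0.
Proof.
move=> ltn2k; rewrite u_tiling_sum; apply: tiling_sum_eq0 => t /eqP tl.
suff /negbTE-> : ndom t != k by rewrite mul0r.
by apply: contraTneq ltn2k => <-; rewrite -leqNgt -tl ndom_le_tiles_len.
Qed.

Lemma u_succ q r s x n k :
  u q r s x n.+1 k = x * (1 + q * r) * u q (q * r) (q * s) x n k +
    (if k is k'.+1 then
       if n is n'.+1 then q * s * u q (q * (q * r)) (q * (q * s)) x n' k' else 0
     else 0).
Proof.
rewrite u_tiling_sum tiling_sumS.
set F := fun t => _ * wr q r s x 0 t.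
have -> : tiling_sum n (F \o cons White) + tiling_sum n (F \o cons Black) =
          x * (1 + q * r) * u q (q * r) (q * s) x n k.
  rewrite u_tiling_sum -tiling_sumD -tiling_sumZ; apply: eq_tiling_sum => t.
  by rewrite /F /comp; cbv beta; rewrite !ndom_cons /= !wr_shift expr1; ring.
congr (_ + _); rewrite {}/F; case: n => [|n]; case: k => [|k] //.
  by apply: tiling_sum_eq0 => t _; rewrite /comp; cbv beta; rewrite ndom_cons mul0r.
rewrite u_tiling_sum -tiling_sumZ; apply: eq_tiling_sum => t.
by rewrite /comp; cbv beta; rewrite ndom_cons /= eqSS !wr_shift expr1; ring.
Qed.

End Weights.

Section QBinomial.
Variables (R : realFieldType) (q : R).
Hypothesis q_neqN1 : q != -1.

Lemma qintD m n : qint q (m + n) = qint q m + q ^+ m * qint q n.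
Proof.
rewrite /qint big_split_ord /= mulr_sumr; congr (_ + _).
by apply: eq_bigr => i _; rewrite exprD.
Qed.

(* [m] = 0 forces q^m = 1, hence q = 1 or q = -1, and [m] = m when q = 1. *)
Lemma qint_neq0 m : (0 < m)%N -> qint q m != 0.
Proof.
case: m => // m _; apply/negP => /eqP qm0.
have qm1 : q ^+ m.+1 == 1 by rewrite expfS_eq1 -/(qint q m.+1) qm0 eqxx orbT.
have : `|q| == 1 by rewrite -(pexpr_eq1 (ltn0Sn m)) // -normrX (eqP qm1) normr1.
rewrite -sqr_norm_eq1 sqrf_eq1 (negbTE q_neqN1) orbF => /eqP q1.
move: qm0; rewrite /qint q1 (eq_bigr (fun _ => 1)) => [|i _]; last exact: expr1n.
by rewrite sumr_const card_ord => /eqP; rewrite pnatr_eq0.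
Qed.

Lemma qfactS m : qfact q m.+1 = qfact q m * qint q m.+1.
Proof. by rewrite /qfact big_ord_recr. Qed.

Lemma qfact_neq0 m : qfact q m != 0.
Proof.
elim: m => [|m IH]; first by rewrite /qfact big_ord0 oner_neq0.
by rewrite qfactS mulf_neq0 // qint_neq0.
Qed.

Lemma qbinom0 m : qbinom q m 0 = 1.
Proof. by rewrite /qbinom subn0 /qfact big_ord0 mul1r divff // qfact_neq0. Qed.

Lemma qbinomm m : qbinom q m m = 1.
Proof. by rewrite /qbinom subnn /qfact big_ord0 mulr1 divff // qfact_neq0. Qed.

Lemma qbinom_pascal j k :
  qbinom q (j + k).+2 k.+1 = qbinom q (j + k).+1 k.+1 + q ^+ j.+1 * qbinom q (j + k).+1 k
  /\ qbinom q (j + k).+2 k.+1 = q ^+ k.+1 * qbinom q (j + k).+1 k.+1 + qbinom q (j + k).+1 k.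
Proof.
rewrite /qbinom.
have -> : ((j + k).+2 - k.+1 = j.+1)%N by lia.
have -> : ((j + k).+1 - k.+1 = j)%N by lia.
have -> : ((j + k).+1 - k = j.+1)%N by lia.
rewrite !qfactS.
have qintSS : qint q (j + k).+2 = qint q j.+1 + q ^+ j.+1 * qint q k.+1.
  by rewrite -qintD addSn addnS.
have qintSS' : qint q (j + k).+2 = q ^+ k.+1 * qint q j.+1 + qint q k.+1.
  by rewrite addrC -qintD addSn addnS addnC.
by split; [rewrite qintSS | rewrite qintSS']; field; rewrite !qfact_neq0 !qint_neq0.
Qed.

End QBinomial.

Lemma expr_sqS (R : pzSemiRingType) (a : R) k :
  a ^+ (k.+1 * k.+1) = a ^+ (k * k) * a ^+ k * a ^+ k * a.
Proof. by rewrite -!exprD -exprSr; congr (_ ^+ _); lia. Qed.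

Section ClosedForm.
Variables (R : realFieldType) (q x : R).
Hypothesis q_neqN1 : q != -1.

Definition qpoch (r : R) a j := \prod_(i < j) (1 + q ^+ (a + i) * r).

Lemma qpoch0 r a : qpoch r a 0 = 1.
Proof. by rewrite /qpoch big_ord0. Qed.

Lemma qpochZ r a j : qpoch (q * r) a j = qpoch r a.+1 j.
Proof. by apply: eq_bigr => i _; rewrite addSn exprS mulrCA mulrA. Qed.

Lemma qpochSl r a j : qpoch r a j.+1 = (1 + q ^+ a * r) * qpoch r a.+1 j.
Proof.
rewrite /qpoch big_ord_recl addn0; congr (_ * _).
by apply: eq_bigr => i _; rewrite /= addSn addnS.
Qed.

Lemma qpochSr r a j : qpoch r a j.+1 = qpoch r a j * (1 + q ^+ (a + j) * r).
Proof. by rewrite /qpoch big_ord_recr. Qed.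

Lemma qpoch_nat r a j : qpoch r a j = \prod_(a <= i < a + j) (1 + q ^+ i * r).
Proof.
elim: j => [|j IH]; first by rewrite qpoch0 addn0 big_geq.
by rewrite qpochSr IH addnS big_nat_recr //= leq_addr.
Qed.

Lemma u_closed j k r s :
  u q r s x (j + 2 * k) k =
  q ^+ (k * k) * qbinom q (j + k) k * qpoch r k.+1 j * s ^+ k * x ^+ j.
Proof.
elim: j k r s => [|j IHj] k; elim: k => [|k IHk] r s.
- by rewrite u0 qbinom0 // qpoch0 !mulr1.
- rewrite !add0n in IHk *; have -> : (2 * k.+1 = (2 * k).+2)%N by lia.
  rewrite u_succ IHk !qbinomm // !qpoch0.
  have -> : u q (q * r) (q * s) x (2 * k).+1 k.+1 = 0 by apply: u_eq0; lia.
  by rewrite expr_sqS !exprMn !exprS; ring.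
- rewrite muln0 !addn0 u_succ addr0.
  have := IHj 0 (q * r) (q * s); rewrite muln0 !addn0 => ->.
  by rewrite !qbinom0 // qpochZ qpochSl !expr0 (exprS x); ring.
- have -> : (j.+1 + 2 * k.+1 = (j + 2 * k.+1).+1)%N by lia.
  rewrite u_succ IHj; have -> : (j + 2 * k.+1 = (j.+1 + 2 * k).+1)%N by lia.
  rewrite IHk !qpochZ (qpochSl r k.+2) (qpochSr r k.+3) !addSn !addnS.
  (* The constant and the r-linear part of the factor 1 + q^(k+2) r need the
     two different q-Pascal rules. *)
  have [pascal pascal'] := qbinom_pascal q_neqN1 j k.
  rewrite mulrDl mul1r !mulrDr !mulrDl {1}pascal' pascal.
  by rewrite !expr_sqS !exprMn !exprS exprD; ring.
Qed.

End ClosedForm.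

Theorem theorem2p2 (R : realFieldType) (q r s x : R) (hq : q != -1)
    (n k : nat) :
  u q r s x n k =
  if (k <= n./2)%N then
    q ^+ (k ^ 2) * qbinom q (n - k) k
      * (\prod_(k.+1 <= i < (n - k).+1) (1 + q ^+ i * r))
      * s ^+ k * x ^+ (n - 2 * k)
  else 0.
Proof.
case: leqP => [|n_lt]; last by apply: u_eq0; rewrite mul2n -ltn_half_double.
rewrite geq_half_double -mul2n => k_le.
have n_eq : n = (n - 2 * k + 2 * k)%N by rewrite subnK.
rewrite {1}n_eq u_closed // qpoch_nat -mulnn.
have -> : (n - 2 * k + k = n - k)%N by lia.
by have -> : (k.+1 + (n - 2 * k) = (n - k).+1)%N by lia.
Qed.
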